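(* Let $p$ be an odd prime, $n=2k$, and $\mathcal{S}=\{y\in\mathbb{F}_{p^n}: T^n_k(y)=0\}$. Let $L(x)=\sum_{j=0}^{n-1}c_jx^{p^j}$ with all $c_j\in\mathbb{F}_{p^k}$ be a linearized polynomial that permutes $\mathbb{F}_{p^n}$, let $\delta\in\mathbb{F}_{p^n}$ be arbitrary, let $t$ be a nonnegative integer and $s=t(p^k+1)$. Then the mapping $$G(x)=-L(x)+(x+\delta)^s-(x+\delta)^{p^ks}$$ permutes $\mathcal{S}$, and consequently $$F(x)=L(x)+(x^{p^k}-x+\delta)^{t(p^k+1)}$$ is a permutation of $\mathbb{F}_{p^n}$.
   Context: $T^n_k(\beta)=\beta+\beta^{p^k}$ for $n=2k$ is the relative trace from $\mathbb{F}_{p^n}$ to $\mathbb{F}_{p^k}$. The convention $y^0=1$ is used. *)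

From HB Require Import structures.
From mathcomp Require Import all_boot all_order all_algebra all_field.
Set Implicit Arguments. Unset Strict Implicit. Unset Printing Implicit Defensive.
Import GRing.Theory.
Local Open Scope ring_scope.

(* Relative trace T^n_k(b) = b + b^(p^k) from F_{p^n} to F_{p^k}, n = 2k. *)
Definition reltrace (F : finFieldType) (p k : nat) (b : F) : F := b + b ^+ (p ^ k).

Definition Sset (F : finFieldType) (p k : nat) : {set F} :=
  [set y : F | reltrace p k y == 0].

Definition in_subfield (F : finFieldType) (p k : nat) (c : F) : Prop :=
  c ^+ (p ^ k) = c.

Definition linpoly (F : finFieldType) (p n : nat) (c : nat -> F) (x : F) : F :=
  \sum_(j < n) c j * x ^+ (p ^ j).

From HB Require Import structures.
From mathcomp Require Import all_boot all_order all_algebra all_field.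
From mathcomp Require Import ring.
Import GRing.Theory.
Local Open Scope ring_scope.

(* Write q = p^k. Since the coefficients of L lie in F_q, L commutes with
   x |-> x^q and is additive, so it commutes with the relative trace and maps
   S into S. The exponent s = t(q+1) makes (x + delta)^s a power of a norm,
   hence fixed by x |-> x^q, so the two power terms of G cancel and G = -L,
   a bijection of F_{q^2} preserving S. For F, applying x |-> x^q - x kills
   the F_q-valued power term and leaves L(x^q - x); thus F(x) = F(y) forces
   x^q - x = y^q - y, and then L(x) = L(y). *)

Section Frobenius.
#[local] Set Implicit Arguments.
#[local] Unset Strict Implicit.

Variables (F : finFieldType) (p : nat).
Hypothesis pcharF : p \in [pchar F].

Lemma pchar_nat_expn j : [pchar F].-nat (p ^ j)%N.
Proof. by rewrite pnatX (pnatE _ (pcharf_prime pcharF)) pcharF. Qed.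

Lemma exprD_pexpn j (a b : F) : (a + b) ^+ (p ^ j) = a ^+ (p ^ j) + b ^+ (p ^ j).
Proof. exact: exprDn_pchar (pchar_nat_expn j). Qed.

Lemma exprN_pexpn j (a : F) : (- a) ^+ (p ^ j) = - a ^+ (p ^ j).
Proof. exact: exprNn_pchar (pchar_nat_expn j). Qed.

Lemma exprB_pexpn j (a b : F) : (a - b) ^+ (p ^ j) = a ^+ (p ^ j) - b ^+ (p ^ j).
Proof. by rewrite exprD_pexpn exprN_pexpn. Qed.

Variables (n : nat) (c : nat -> F).
Local Notation L := (linpoly p n c).

Lemma linpolyB a b : L (a - b) = L a - L b.
Proof.
rewrite /linpoly -sumrB; apply: eq_bigr => j _.
by rewrite exprB_pexpn mulrBr.
Qed.

Lemma linpoly0 : L 0 = 0.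
Proof. by have := linpolyB 0 0; rewrite !subrr. Qed.

Lemma linpolyN a : L (- a) = - L a.
Proof. by rewrite -sub0r linpolyB linpoly0 sub0r. Qed.

Lemma linpolyD a b : L (a + b) = L a + L b.
Proof. by rewrite -{1}[b]opprK linpolyB linpolyN opprK. Qed.

Lemma linpoly_pexpn m :
  (forall j, (j < n)%N -> in_subfield p m (c j)) ->
  forall x, L (x ^+ (p ^ m)) = L x ^+ (p ^ m).
Proof.
move=> cF x.
have frob0 : 0 ^+ (p ^ m) = 0 :> F.
  by rewrite expr0n expn_eq0 eqn0Ngt prime_gt0 ?(pcharf_prime pcharF).
rewrite /linpoly (big_morph _ (exprD_pexpn m) frob0).
apply: eq_bigr => j _.
by rewrite exprMn (cF j (ltn_ord j)) -!exprM mulnC.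
Qed.

Variable k : nat.
Hypothesis cF : forall j, (j < n)%N -> in_subfield p k (c j).

Lemma reltraceN (y : F) : reltrace p k (- y) = - reltrace p k y.
Proof. by rewrite /reltrace exprN_pexpn opprD. Qed.

Lemma SsetN (y : F) : (- y \in Sset F p k) = (y \in Sset F p k).
Proof. by rewrite !inE reltraceN oppr_eq0. Qed.

Lemma reltrace_linpoly y : reltrace p k (L y) = L (reltrace p k y).
Proof. by rewrite /reltrace linpolyD (linpoly_pexpn cF). Qed.

Lemma linpoly_Sset y : y \in Sset F p k -> L y \in Sset F p k.
Proof. by rewrite !inE reltrace_linpoly => /eqP->; rewrite linpoly0. Qed.

Lemma linpoly_add_subfield_inj (h : F -> F) :
  injective L -> (forall u, in_subfield p k (h u)) ->
  injective (fun x => L x + h (x ^+ (p ^ k) - x)).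
Proof.
move=> Linj hF.
pose phi x := L x + h (x ^+ (p ^ k) - x).
have phi_artin x : phi x ^+ (p ^ k) - phi x = L (x ^+ (p ^ k) - x).
  rewrite /phi exprD_pexpn hF -(linpoly_pexpn cF) linpolyB.
  by rewrite opprD addrACA subrr addr0.
move=> x y /= eq_phi.
have eq_artin : x ^+ (p ^ k) - x = y ^+ (p ^ k) - y.
  by apply: Linj; rewrite -phi_artin -phi_artin /phi eq_phi.
by apply: Linj; apply: (addIr (h (y ^+ (p ^ k) - y))); rewrite -{1}eq_artin.
Qed.

End Frobenius.

Lemma expr_pexpn_sqr {F : finFieldType} {p k : nat} :
  #|F| = (p ^ (2 * k))%N -> forall z : F, z ^+ (p ^ k * p ^ k) = z.
Proof. by move=> cardF z; rewrite -expnD addnn -mul2n -cardF expf_card. Qed.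

Lemma in_subfield_norm_power {F : finFieldType} {p k : nat} :
  #|F| = (p ^ (2 * k))%N ->
  forall (t : nat) (z : F), in_subfield p k (z ^+ (t * (p ^ k + 1))).
Proof.
move=> cardF t z; rewrite /in_subfield -exprM.
have -> : (t * (p ^ k + 1) * p ^ k = p ^ k * p ^ k * t + p ^ k * t)%N by ring.
by rewrite exprD exprM (expr_pexpn_sqr cardF) addnC mulnDr muln1 mulnC exprD.
Qed.

Theorem proposition7 (F : finFieldType) (p k : nat)
  (hp : prime p) (hodd : odd p) (hchar : p \in [pchar F])
  (hcard : #|F| = (p ^ (2 * k))%N)
  (c : nat -> F) (hc : forall j : nat, (j < 2 * k)%N -> in_subfield p k (c j))
  (hL : bijective (linpoly p (2 * k) c))
  (delta : F) (t : nat) :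
  let s := (t * (p ^ k + 1))%N in
  let L := linpoly p (2 * k) c in
  let G := fun x : F => - L x + (x + delta) ^+ s - (x + delta) ^+ (p ^ k * s) in
  let Fm := fun x : F => L x + (x ^+ (p ^ k) - x + delta) ^+ (t * (p ^ k + 1)) in
  [/\ {in @Sset F p k, forall y, G y \in @Sset F p k},
      {in @Sset F p k &, injective G} &
      bijective Fm].
Proof.
move=> s L G Fm.
have Linj : injective L := bij_inj hL.
have GE y : G y = - L y.
  by rewrite /G mulnC exprM (in_subfield_norm_power hcard) addrK.
split.
- by move=> y Sy; rewrite GE (SsetN hchar) (linpoly_Sset hchar hc Sy).
- by move=> y1 y2 _ _; rewrite !GE => /oppr_inj /Linj.
apply/injF_bij/(@linpoly_add_subfield_inj _ _ hchar _ _ _ hc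
                   (fun u => (u + delta) ^+ s)) => // u.
exact: in_subfield_norm_power hcard t (u + delta).
Qed.
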